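(* Let $p$ be a prime and $m\ge1$. Suppose $\underline{x}=(x_{1},\dots,x_{m})$ and $\underline{y}=(y_{1},\dots,y_{m})$ are elements of $SU(p)^{m}$ with $\underline{c}:=[\underline{x},\underline{y}]=(c,\dots,c)\in\Delta(\mathbb{Z}/p)$ for some $c\in Z(SU(p))$, $c\ne 1$. Let $\underline{z}\in SU(p)^{m}$ satisfy $[\underline{x},\underline{z}],[\underline{y},\underline{z}]\in\Delta(\mathbb{Z}/p)$, and write $[\underline{x},\underline{z}]=\underline{c}^{b}$ and $[\underline{y},\underline{z}]=\underline{c}^{a}$ with integers $0\le a,b<p$. Then there is $\underline{w}=(w_{1},\dots,w_{m})\in Z(SU(p)^{m})$ such that $\underline{z}=\underline{w}\,\underline{x}^{-a}\underline{y}^{b}$, i.e. $z_{i}=w_{i}x_{i}^{-a}y_{i}^{b}$ for all $i$.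
   Context: $Z(SU(p))\cong\mathbb{Z}/p$ is the center of $SU(p)$, and $\Delta(\mathbb{Z}/p)=\{(c,\dots,c): c\in Z(SU(p))\}\subset Z(SU(p)^m)$. The commutator is $[u,v]=uvu^{-1}v^{-1}$. *)

From HB Require Import structures.
From mathcomp Require Import all_boot all_order all_algebra.
From mathcomp Require Import complex.
From mathcomp Require Import reals.
Set Implicit Arguments. Unset Strict Implicit. Unset Printing Implicit Defensive.
Import Order.TTheory GRing.Theory Num.Theory.
Local Open Scope ring_scope.

Definition adjmx (C : numClosedFieldType) n (A : 'M[C]_n) : 'M[C]_n :=
  (map_mx Num.conj A)^T.

Definition inSU (C : numClosedFieldType) n (A : 'M[C]_n) : Prop :=
  A *m adjmx A = 1%:M /\ \det A = 1.

Definition inZSU (C : numClosedFieldType) n (A : 'M[C]_n) : Prop :=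
  inSU A /\ forall B : 'M[C]_n, inSU B -> A *m B = B *m A.

Definition commx (C : numClosedFieldType) n (u v : 'M[C]_n) : 'M[C]_n :=
  u *m v *m invmx u *m invmx v.

From HB Require Import structures.
From mathcomp Require Import all_boot all_order all_algebra perm.
From mathcomp Require Import complex.
From mathcomp Require Import reals.
Import Order.TTheory GRing.Theory Num.Theory.
Local Open Scope ring_scope.
Set Implicit Arguments. Unset Strict Implicit. Unset Printing Implicit Defensive.

(* The centre of SU(p) consists of scalar matrices, so c = zeta I with zeta a
   primitive p-th root of unity, and each pair (x_k, y_k) satisfies the Weyl
   relation x y x^-1 = zeta y.  Conjugation by x or y rescales x^D y^E by a
   nontrivial root of unity unless p divides D and E, so its trace vanishes;
   hence tr((x^k y^l)^-1 x^i y^j) = p [(i,j) = (k,l)] and the p^2 matrices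
   x^i y^j form a basis of M_p(C).  The commutator relations for z say that
   w = z y^-b x^a commutes with x and y, hence with every matrix: w is
   central. *)

Lemma linear_mx_surj (F : fieldType) m n
    (f : {linear 'M[F]_(m, n) -> 'M[F]_(m, n)}) :
  (forall A, f A = 0 -> A = 0) -> forall B, exists A, f A = B.
Proof.
move=> f_inj B.
have f_unit : lin_mx f \in unitmx.
  rewrite -row_free_unit -kermx_eq0; apply/eqP/row_matrixP => r.
  rewrite row0; apply: (can_inj vec_mxK); rewrite linear0.
  apply: f_inj; apply: (can_inj mxvecK); rewrite -mul_rV_lin linear0 -row_mul.
  by rewrite mulmx_ker row0.
exists (vec_mx (mxvec B *m invmx (lin_mx f))).
by apply: (can_inj mxvecK); rewrite -mul_rV_lin mulmxKV.
Qed.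

Section MatrixCombination.
Variables (F : fieldType) (n : nat) (B : 'I_n -> 'I_n -> 'M[F]_n).

Definition mxcomb (al : 'M[F]_n) : 'M[F]_n := \sum_i \sum_j al i j *: B i j.

Fact mxcomb_is_linear : linear mxcomb.
Proof.
move=> a u v; rewrite /mxcomb scaler_sumr -big_split; apply: eq_bigr => i _.
rewrite scaler_sumr -big_split; apply: eq_bigr => j _.
by rewrite !mxE scalerDl scalerA.
Qed.

HB.instance Definition _ :=
  GRing.isLinear.Build F 'M[F]_n 'M[F]_n _ mxcomb mxcomb_is_linear.

Lemma mxcomb_surj :
  (forall al, mxcomb al = 0 -> al = 0) -> forall A, exists al, mxcomb al = A.
Proof. exact: (@linear_mx_surj F n n mxcomb). Qed.

End MatrixCombination.

Lemma prime_prim_root (R : idomainType) (z : R) p :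
  prime p -> z ^+ p = 1 -> z != 1 -> p.-primitive_root z.
Proof.
move=> p_pr zp z1; have [d d_prim d_dvd] := prim_order_exists (prime_gt0 p_pr) zp.
case/primeP: p_pr => _ /(_ d d_dvd) /orP[/eqP d1|/eqP <-] //.
by move: z1; rewrite -(prim_expr_order d_prim) d1 expr1 eqxx.
Qed.

Lemma prim_root_expzB_neq1 (F : fieldType) n (z : F) (i k : 'I_n) :
  n.-primitive_root z -> i != k -> z ^ (i%:Z - k%:Z) != 1.
Proof.
move=> z_prim; apply: contra => /eqP.
have z_neq0 : z != 0 by rewrite (prim_root_eq0 z_prim) -lt0n (prim_order_gt0 z_prim).
rewrite expfzDr // -invr_expz => /divr1_eq/eqP.
by rewrite (eq_prim_root_expr z_prim) !modn_small.
Qed.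

Section UnitConjugation.
Variables (R : unitRingType) (u : R).
Hypothesis u_unit : u \is a GRing.unit.

Lemma conjrM (g h : R) : u * (g * h) * u^-1 = (u * g * u^-1) * (u * h * u^-1).
Proof. by rewrite !mulrA divrK. Qed.

Lemma conjr_expz (g : R) (E : int) : g \is a GRing.unit ->
  u * g ^ E * u^-1 = (u * g * u^-1) ^ E.
Proof.
move=> g_unit.
have conjrX k : u * g ^+ k * u^-1 = (u * g * u^-1) ^+ k.
  elim: k => [|k IH]; first by rewrite !expr0 mulr1 mulrV.
  by rewrite [RHS]exprS -IH !mulrA divrK // exprS !mulrA.
case: E => k /=; first exact: conjrX.
change (u * (g ^+ k.+1)^-1 * u^-1 = ((u * g / u) ^+ k.+1)^-1).
by rewrite -conjrX !invrM ?unitrX ?unitrV ?unitrMr ?unitrX // invrK mulrA.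
Qed.

Lemma conjr_expz_self (E : int) : u * u ^ E * u^-1 = u ^ E.
Proof. by rewrite (commrXz _ (commr_refl u)) mulrK. Qed.

Lemma conjr_expz_comm (g s : R) (E : int) :
    g \is a GRing.unit -> s \is a GRing.unit -> GRing.comm s g ->
  u * g * u^-1 = s * g -> u * g ^ E * u^-1 = s ^ E * g ^ E.
Proof. by move=> g_unit s_unit sg ugu; rewrite conjr_expz // ugu exprMz_comm. Qed.

Lemma conjr_fixed_comm (g : R) : u * g * u^-1 = g -> GRing.comm g u.
Proof. by move=> ugu; rewrite /GRing.comm -{1}ugu divrK. Qed.

End UnitConjugation.

Lemma adjmxM (C : numClosedFieldType) n (A B : 'M[C]_n) :
  adjmx (A *m B) = adjmx B *m adjmx A.
Proof. by rewrite /adjmx map_mxM trmx_mul. Qed.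

Lemma adjmxK (C : numClosedFieldType) n (A : 'M[C]_n) : adjmx (adjmx A) = A.
Proof. by apply/matrixP => i j; rewrite !mxE conjCK. Qed.

Section SpecialUnitary.
Variables (C : numClosedFieldType) (n : nat).
Local Notation M := 'M[C]_n.+1.

Lemma inSU_unit (A : M) : inSU A -> A \is a GRing.unit.
Proof. by case=> _ detA; rewrite unitmxE detA unitr1. Qed.

Lemma inSU_invE (A : M) : inSU A -> A^-1 = adjmx A.
Proof.
move=> SU_A; have A_unit := inSU_unit SU_A; case: SU_A => AA _.
by rewrite -[A^-1]mulr1 -[1]/(1%:M : M) -AA mulmxE mulrA mulVr // mul1r.
Qed.

Lemma inSU1 : inSU (1 : M).
Proof. by split; [rewrite /adjmx map_mx1 trmx1 mulmx1 | exact: det1]. Qed.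

Lemma inSUV (A : M) : inSU A -> inSU A^-1.
Proof.
move=> SU_A; split; last by rewrite detV SU_A.2 invr1.
by rewrite inSU_invE // adjmxK; apply: mulmx1C; exact: SU_A.1.
Qed.

Lemma inSUM (A B : M) : inSU A -> inSU B -> inSU (A * B).
Proof.
move=> SU_A SU_B; split; last by rewrite -mulmxE det_mulmx SU_A.2 SU_B.2 mulr1.
by rewrite -mulmxE adjmxM mulmxA -(mulmxA A) SU_B.1 mulmx1 SU_A.1.
Qed.

Lemma inSUX (A : M) k : inSU A -> inSU (A ^+ k).
Proof.
by move=> SU_A; elim: k => [|k IH]; rewrite ?expr0 ?exprS; [exact: inSU1 | exact: inSUM].
Qed.

Lemma inSUXz (A : M) (E : int) : inSU A -> inSU (A ^ E).
Proof. by case: E => k SU_A; [exact: inSUX | exact/inSUV/inSUX]. Qed.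

Lemma diag_mx_unitary (d : 'rV[C]_n.+1) :
  (forall i, d 0 i * (d 0 i)^* = 1) -> diag_mx d *m adjmx (diag_mx d) = 1%:M.
Proof.
move=> d_unit; apply/matrixP => i j; rewrite mul_diag_mx !mxE.
by case: (eqVneq i j) => [->|_]; rewrite ?mulr1n ?d_unit // mulr0n rmorph0 mulr0.
Qed.

Lemma perm_mx_unitary (s : 'S_n.+1) : perm_mx s *m adjmx (perm_mx s) = (1%:M : M).
Proof. by rewrite /adjmx map_perm_mx tr_perm_mx -perm_mxM mulgV perm_mx1. Qed.

Section Centralizer.
Variable c : M.
Hypothesis c_central : forall B, inSU B -> c *m B = B *m c.

Lemma SU_centralizer_offdiag k l : k != l -> c k l = 0.
Proof.
(* Conjugation by diag(.., i, .., -i, ..) negates the (k, l) entry. *)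
move=> kl; pose d : 'rV[C]_n.+1 :=
  \row_m (if m == k then 'i else if m == l then - 'i else 1).
have SU_d : inSU (diag_mx d).
  split.
    apply: diag_mx_unitary => i; rewrite !mxE.
    case: ifP => _; first by rewrite conjCi mulrN mulCii opprK.
    case: ifP => _; last by rewrite rmorph1 mulr1.
    have ci : (- 'i : C)^* = 'i by rewrite -conjCi conjCK.
    by rewrite ci mulNr mulCii opprK.
  rewrite det_diag (bigD1 k) //= (bigD1 l) /=; last by rewrite eq_sym.
  rewrite big1 => [|m /andP[mk ml]]; last by rewrite mxE (negbTE mk) (negbTE ml).
  by rewrite !mxE eqxx eq_sym (negbTE kl) eqxx mulr1 mulrN mulCii opprK.
have /matrixP/(_ k l) := c_central SU_d.
rewrite mul_diag_mx mul_mx_diag !mxE eqxx eq_sym (negbTE kl) eqxx => ckl.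
have : 'i *+ 2 * c k l = 0 by rewrite mulr2n mulrDl -{1}ckl mulrN mulrC addNr.
by move/eqP; rewrite mulf_eq0 mulrn_eq0 /= (negbTE (neq0Ci C)) => /eqP.
Qed.

Lemma SU_centralizer_diag k l : c k k = c l l.
Proof.
have [<-//|kl] := eqVneq k l.
pose e : 'rV[C]_n.+1 := \row_m (if m == k then -1 else 1).
pose S := diag_mx e *m perm_mx (tperm k l).
have SU_S : inSU S.
  split.
    rewrite /S adjmxM mulmxA -(mulmxA (diag_mx e)) perm_mx_unitary mulmx1.
    apply: diag_mx_unitary => i.
    by rewrite !mxE; case: ifP => _; rewrite ?rmorphN1 ?rmorph1 ?mulrNN mulr1.
  rewrite det_mulmx det_perm odd_tperm kl det_diag (bigD1 k) //= big1 => [|m mk].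
    by rewrite mxE eqxx mulr1 expr1 mulrNN mulr1.
  by rewrite mxE (negbTE mk).
have c_diag : c = diag_mx (\row_m c m m).
  apply/matrixP => i j; rewrite !mxE.
  by case: (eqVneq i j) => [->|ij]; rewrite ?mulr1n // mulr0n SU_centralizer_offdiag.
have /matrixP/(_ k l) := c_central SU_S.
rewrite {1}c_diag {2}c_diag /S mul_diag_mx mul_mx_diag mul_diag_mx !mxE !eqxx.
by rewrite tpermL eqxx mulr1 mulrN1 mulN1r => /oppr_inj.
Qed.

Lemma SU_centralizer_scalar : is_scalar_mx c.
Proof.
apply/is_scalar_mxP; exists (c 0 0); apply/matrixP => i j; rewrite !mxE.
case: (eqVneq i j) => [<-|ij]; first by rewrite mulr1n; apply: SU_centralizer_diag.
by rewrite mulr0n SU_centralizer_offdiag.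
Qed.

End Centralizer.
End SpecialUnitary.

Lemma commxE (C : numClosedFieldType) n (u v : 'M[C]_n.+1) :
  commx u v = u * v * u^-1 * v^-1.
Proof. by rewrite /commx !mulmxE. Qed.

Section ScalarConjugation.
Variables (C : numClosedFieldType) (n : nat).
Local Notation M := 'M[C]_n.+1.

Lemma scalar_mx_commr (a : C) (A : M) : A * a%:M = a%:M * A.
Proof. by rewrite -mulmxE scalar_mxC. Qed.

Lemma scalar_mx_mulA (s t : C) (A B : M) :
  s%:M * A * (t%:M * B) = (s * t)%:M * (A * B).
Proof. by rewrite mulrA -(mulrA _ A) scalar_mx_commr mulrA -rmorphM mulrA. Qed.

Lemma scalar_mx_unit (a : C) : a != 0 -> (a%:M : M) \is a GRing.unit.
Proof. by move=> a_neq0; rewrite unitmxE det_scalar unitfE expf_neq0. Qed.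

Lemma commx_conj (u v s : M) : v \is a GRing.unit -> commx u v = s ->
  u * v * u^-1 = s * v.
Proof. by move=> v_unit; rewrite commxE => <-; rewrite divrK. Qed.

Lemma conj_scalar_expz (u g : M) (s : C) (E : int) :
    u \is a GRing.unit -> g \is a GRing.unit -> s != 0 ->
  u * g * u^-1 = s%:M * g -> u * g ^ E * u^-1 = (s ^ E)%:M * g ^ E.
Proof.
move=> u_unit g_unit s_neq0 ugu.
rewrite (conjr_expz_comm u_unit E g_unit (scalar_mx_unit s_neq0)) //.
  by rewrite rmorphXz // unitfE.
by rewrite /GRing.comm scalar_mx_commr.
Qed.

Lemma mxtrace_conj_scalar_eq0 (u A : M) (s : C) : u \is a GRing.unit ->
  u * A * u^-1 = s%:M * A -> s != 1 -> \tr A = 0.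
Proof.
move=> u_unit uAu s_neq1.
have : \tr A = s * \tr A.
  rewrite -mxtraceZ -mul_scalar_mx mulmxE -uAu -mulmxE mxtrace_mulC mulmxE.
  by rewrite mulKr.
move/eqP; rewrite -subr_eq0 -{1}[\tr A]mul1r -mulrBl mulf_eq0 subr_eq0 eq_sym.
by rewrite (negbTE s_neq1) => /eqP.
Qed.

End ScalarConjugation.

Section WeylPair.
Variables (C : numClosedFieldType) (n : nat) (zeta : C) (x y : 'M[C]_n.+1).
Local Notation M := 'M[C]_n.+1.
Hypotheses (zeta_prim : n.+1.-primitive_root zeta)
  (x_unit : x \is a GRing.unit) (y_unit : y \is a GRing.unit)
  (xy_comm : commx x y = zeta%:M).

Let zeta_neq0 : zeta != 0. Proof. by rewrite (prim_root_eq0 zeta_prim). Qed.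

Lemma weyl_conj_xy (E : int) : x * y ^ E * x^-1 = (zeta ^ E)%:M * y ^ E.
Proof. exact/conj_scalar_expz/commx_conj. Qed.

Lemma weyl_conj_yx (D : int) : y * x ^ D * y^-1 = (zeta ^ (- D))%:M * x ^ D.
Proof.
rewrite -exprz_inv; apply: conj_scalar_expz; rewrite ?invr_eq0 //.
have zeta_unit := scalar_mx_unit n zeta_neq0.
apply: (mulrI zeta_unit); rewrite rmorphV ?unitfE // mulVKr // !mulrA.
by rewrite -(commx_conj y_unit xy_comm) divrK // mulrK.
Qed.

Lemma weyl_mxtrace_eq0 (D E : int) :
  (zeta ^ D != 1) || (zeta ^ E != 1) -> \tr (x ^ D * y ^ E) = 0.
Proof.
case/orP => zeta_neq1.
- apply: (mxtrace_conj_scalar_eq0 y_unit (s := zeta ^ (- D))).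
    by rewrite conjrM // weyl_conj_yx conjr_expz_self // mulrA.
  by rewrite -invr_expz invr_eq1.
- apply: (mxtrace_conj_scalar_eq0 x_unit (s := zeta ^ E)) => //.
  by rewrite conjrM // conjr_expz_self // weyl_conj_xy mulrA scalar_mx_commr mulrA.
Qed.

Lemma weyl_mxtrace_dual (i j k l : 'I_n.+1) :
  \tr ((x ^+ k * y ^+ l)^-1 * (x ^+ i * y ^+ j)) =
  if (i == k) && (j == l) then n.+1%:R else 0.
Proof.
have -> : (x ^+ k * y ^+ l)^-1 * (x ^+ i * y ^+ j) =
    (y ^+ l)^-1 * (x ^ (i%:Z - k%:Z) * y ^+ j).
  rewrite invrM ?unitrX // -mulrA; congr (_ * _).
  by rewrite addrC exprzDr // -invr_expz mulrA.
rewrite -mulmxE mxtrace_mulC mulmxE -mulrA.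
have -> : y ^+ j * (y ^+ l)^-1 = y ^ (j%:Z - l%:Z) by rewrite exprzDr // -invr_expz.
case: ifP => [/andP[/eqP -> /eqP ->]|ij_neq_kl].
  by rewrite !subrr !expr0z mulr1 mxtrace1.
apply: weyl_mxtrace_eq0; have [ik|ik] := eqVneq i k.
  rewrite ik eqxx /= in ij_neq_kl.
  by rewrite orbC prim_root_expzB_neq1 // ij_neq_kl.
by rewrite prim_root_expzB_neq1.
Qed.

Lemma weyl_free (al : 'M[C]_n.+1) :
  mxcomb (fun i j => x ^+ i * y ^+ j) al = 0 -> al = 0.
Proof.
move=> al_comb0; apply/matrixP => k l; rewrite mxE.
have dual i j : \tr ((x ^+ k * y ^+ l)^-1 * (al i j *: (x ^+ i * y ^+ j))) =
    al i j * (if (i == k) && (j == l) then n.+1%:R else 0).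
  by rewrite -scalerAr linearZ /= weyl_mxtrace_dual.
have : \tr ((x ^+ k * y ^+ l)^-1 * mxcomb (fun i j => x ^+ i * y ^+ j) al) = 0.
  by rewrite al_comb0 mulr0 linear0.
rewrite /mxcomb mulr_sumr linear_sum.
under eq_bigr => i _ do rewrite mulr_sumr linear_sum (eq_bigr _ (fun j _ => dual i j)).
rewrite (bigD1 k) //= [X in _ + X]big1 => [|i ik]; last first.
  by rewrite big1 // => j _; rewrite (negbTE ik) mulr0.
rewrite addr0 (bigD1 l) //= [X in _ + X]big1 => [|j jl]; last first.
  by rewrite (negbTE jl) andbF mulr0.
rewrite addr0 !eqxx /= => /eqP.
by rewrite mulf_eq0 pnatr_eq0 orbF => /eqP.
Qed.

Lemma weyl_centralizer (w : M) :
  GRing.comm w x -> GRing.comm w y -> forall A : M, GRing.comm w A.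
Proof.
move=> wx wy A; have [al <-] := mxcomb_surj weyl_free A.
apply: commr_sum => i _; apply: commr_sum => j _.
by rewrite /GRing.comm -scalerAr -scalerAl (commrM (commrX i wx) (commrX j wy)).
Qed.

Lemma weyl_correction_central (z : M) (a b : nat) : z \is a GRing.unit ->
    commx x z = (zeta ^+ b)%:M -> commx y z = (zeta ^+ a)%:M ->
  forall A : M, GRing.comm (z * y ^ (- b%:Z) * x ^+ a) A.
Proof.
move=> z_unit xz yz; set w := z * _ * _.
have zeta_expzN e : zeta ^+ e * zeta ^ (- e%:Z) = 1.
  by rewrite -invr_expz divff // expf_neq0.
have xwx : x * w * x^-1 = w.
  rewrite !conjrM // (commx_conj z_unit xz) weyl_conj_xy (conjr_expz_self x_unit a).
  by rewrite scalar_mx_mulA zeta_expzN mul1r.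
have ywy : y * w * y^-1 = w.
  rewrite !conjrM // (commx_conj z_unit yz) (weyl_conj_yx a) (conjr_expz_self y_unit).
  by rewrite -(mulrA _ z) scalar_mx_mulA zeta_expzN mul1r.
exact: weyl_centralizer (conjr_fixed_comm x_unit xwx) (conjr_fixed_comm y_unit ywy).
Qed.

End WeylPair.

Theorem lemma3p3 (R : realType) (p m : nat) (hp : prime p) (hm : (1 <= m)%N)
  (x y z : 'I_m -> 'M[R[i]]_p) (c : 'M[R[i]]_p) (a b : nat)
  (hx : forall k, inSU (x k)) (hy : forall k, inSU (y k))
  (hz : forall k, inSU (z k))
  (hc : inZSU c) (hc1 : c != 1%:M)
  (hxy : forall k, commx (x k) (y k) = c)
  (ha : (a < p)%N) (hb : (b < p)%N)
  (hxz : forall k, commx (x k) (z k) = c ^+ b)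
  (hyz : forall k, commx (y k) (z k) = c ^+ a) :
  exists w : 'I_m -> 'M[R[i]]_p,
    (forall k, inZSU (w k)) /\
    (forall k, z k = w k *m invmx (x k ^+ a) *m (y k ^+ b)).
Proof.
case: p hp x y z c hx hy hz hc hc1 hxy ha hb hxz hyz => [//|n] hp x y z c
  hx hy hz hc hc1 hxy _ _ hxz hyz.
have /is_scalar_mxP[zeta cE] := SU_centralizer_scalar hc.2.
have zeta_prim : n.+1.-primitive_root zeta.
  apply: prime_prim_root hp _ _; first by rewrite -det_scalar -cE hc.1.2.
  by apply: contraNneq hc1 => zeta1; rewrite cE zeta1.
have cX e : c ^+ e = (zeta ^+ e)%:M by rewrite cE rmorphXn.
exists (fun k => z k * y k ^ (- b%:Z) * x k ^+ a); split=> k; last first.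
  have [x_unit y_unit] := (inSU_unit (hx k), inSU_unit (hy k)).
  rewrite !mulmxE -[invmx _]/((x k ^+ a)^-1) mulrK ?unitrX // -invr_expz.
  by rewrite divrK ?unitrX.
have xy : commx (x k) (y k) = zeta%:M by rewrite hxy cE.
have xz : commx (x k) (z k) = (zeta ^+ b)%:M by rewrite hxz cX.
have yz : commx (y k) (z k) = (zeta ^+ a)%:M by rewrite hyz cX.
split; first by apply: inSUM; [apply: inSUM; [|apply: inSUXz] | apply: inSUX].
move=> B _; rewrite mulmxE.
exact: (weyl_correction_central zeta_prim (inSU_unit (hx k)) (inSU_unit (hy k)) xy
  (inSU_unit (hz k)) xz yz).
Qed.
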